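(* With the notation below, $\bar{\mathcal{A}}_q=\bar{\mathcal{A}}^0_q\oplus\bar{\mathcal{A}}^1_q$ and $\bar{\mathcal{C}}_q=\bar{\mathcal{C}}^0_q\oplus\bar{\mathcal{C}}^1_q$, and: (1) $\bar{\mathcal{C}}^0_q\subseteq\bar{\mathcal{A}}^0_q$ and $\dim_{\bar K}\bar{\mathcal{A}}^0_q=2\dim_{\bar K}\bar{\mathcal{C}}^0_q$; (2) $\bar{\mathcal{C}}^1_q=\bar{\mathcal{A}}^1_q$; in particular $\dim_{\bar K}\bar{\mathcal{A}}^1_q=\dim_{\bar K}\bar{\mathcal{C}}^1_q$.
   Context: $q$ indeterminate, $K=\mathbb{Q}(q)$, $\bar K$ an algebraic closure, $m,n\ge0$, $r\ge2$. $\mathcal{H}_{\bar K,r}(q)$ is the type $A$ Iwahori–Hecke algebra over $\bar K$ (generators $T_i$, $T_i^2=(q-q^{-1})T_i+1$, braid relations); the Goldman involution $X\mapsto\hat X$ is the algebra automorphism with $\hat T_i=(q-q^{-1})-T_i$, and $\mathcal{H}^1_{\bar K,r}(q)=\{X:\hat X=X\}$. $\bar V$ is the $\mathbb{Z}_2$-graded $\bar K$-space with basis $v_1,\dots,v_{m+n}$, $|v_k|=0$ for $k\le m$, $1$ for $k>m$; $\pi_r$ is the $q$-permutation representation on $\bar V^{\otimes r}$: $\pi_r(T_i)=\mathrm{Id}^{\otimes i-1}\otimes T\otimes\mathrm{Id}^{\otimes r-i-1}$, where $T(v_k\otimes v_k)=\frac{(-1)^{|v_k|}(q+q^{-1})+q-q^{-1}}{2}v_k\otimes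 v_k$, $T(v_k\otimes v_l)=(-1)^{|v_k||v_l|}v_l\otimes v_k+(q-q^{-1})v_k\otimes v_l$ for $k<l$, $T(v_k\otimes v_l)=(-1)^{|v_k||v_l|}v_l\otimes v_k$ for $k>l$. $\bar{\mathcal{A}}_q=\pi_r(\mathcal{H}_{\bar K,r}(q))$, $\bar{\mathcal{C}}_q=\pi_r(\mathcal{H}^1_{\bar K,r}(q))$. Write $\mathcal{H}_{\bar K,r}(q)=\bigoplus_\lambda I_{q,\lambda}$ (Wedderburn decomposition, $\lambda$ running over partitions of $r$, $I_{q,\lambda}\cong\operatorname{Mat}_{d_\lambda}(\bar K)$ the block of the Specht module $S^\lambda$); $\hat I_{q,\lambda}=I_{q,\lambda'}$ with $\lambda'$ the transpose. Let $H(m,n;r)$ be the set of partitions $\lambda=(\lambda_1,\lambda_2,\dots)$ of $r$ with $\lambda_j\le n$ for all $j>m$ (those in the $(m,n)$-hook); it is known that $\pi_r$ is injective on $I_{q,\lambda}$ for $\lambda\in H(m,n;r)$ and zero on $I_{q,\lambda}$ otherwise, so $\bar{\mathcal{A}}_q=\bigoplus_{\lambda\in H(m,n;r)}\pi_r(I_{q,\lambda})$. Let $H_0(m,n;r)=\{\lambda:\lambda,\lambda'\in H(m,n;r)\}$ and $H_1(m,n;r)=H(m,n;r)\setminus H_0(m,n;r)$. For $\lambda\ne\lambda'$ put $\tilde I_{q,\lambda}=\{X+\hat X:X\in I_{q,\lambda}\}$; for $\lambda=\lambda'$ put $\tilde I_{q,\lambda}=\{X\in I_{q,\lambda}:\hat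 X=X\}$, which is a direct sum $\tilde I^+_{q,\lambda}\oplus\tilde I^-_{q,\lambda}$ of two simple algebras $\cong\operatorname{Mat}_{d_\lambda/2}(\bar K)$. Define $\bar{\mathcal{A}}^0_q=\bigoplus_{\lambda\in H_0(m,n;r)}\pi_r(I_{q,\lambda})$, $\bar{\mathcal{A}}^1_q=\bigoplus_{\lambda\in H_1(m,n;r)}\pi_r(I_{q,\lambda})$, $\bar{\mathcal{C}}^0_q=\bigoplus_{\lambda\in H_0(m,n;r),\,\lambda>\lambda'}\pi_r(\tilde I_{q,\lambda})\oplus\bigoplus_{\lambda\in H_0(m,n;r),\,\lambda=\lambda'}\big(\pi_r(\tilde I^+_{q,\lambda})\oplus\pi_r(\tilde I^-_{q,\lambda})\big)$, $\bar{\mathcal{C}}^1_q=\bigoplus_{\lambda\in H_1(m,n;r)}\pi_r(\tilde I_{q,\lambda})$, where $>$ is the lexicographic order on partitions. *)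

From HB Require Import structures.
From mathcomp Require Import all_boot all_order all_algebra falgebra.
Set Implicit Arguments. Unset Strict Implicit. Unset Printing Implicit Defensive.
Import GRing.Theory.
Local Open Scope ring_scope.

Definition ptn (r : nat) := (r.-tuple 'I_r.+1)%type.
Definition pv r (l : ptn r) : seq nat := [seq val i | i <- val l].
Definition is_part r (l : ptn r) : bool :=
  sorted geq (pv l) && (sumn (pv l) == r).
Definition ptn_conj r (l : ptn r) : ptn r :=
  [tuple (inord (count (fun x => (i < x)%N) (pv l)) : 'I_r.+1) | i < r].
(* (m,n)-hook: l_j <= n for all j > m (1-based), i.e. for 0-based j >= m *)
Definition inH (m n r : nat) (l : ptn r) : bool :=
  [forall j : 'I_r, (m <= j)%N ==> (nth 0 (pv l) j <= n)%N].
Definition inH0 m n r (l : ptn r) := inH m n l && inH m n (ptn_conj l).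
Definition inH1 m n r (l : ptn r) := inH m n l && ~~ inH m n (ptn_conj l).
Fixpoint lex_lt (s t : seq nat) : bool :=
  match s, t with
  | x :: s', y :: t' => (x < y)%N || ((x == y) && lex_lt s' t')
  | _, _ => false
  end.
Definition ptn_gt r (l k : ptn r) := lex_lt (pv k) (pv l).

(* ---------- tensor space  V^{\otimes r}, basis v_{w_1} ⊗ ... ⊗ v_{w_r} *)
Definition word (m n r : nat) := (r.-tuple 'I_(m + n))%type.
Definition wv m n r (w : word m n r) : seq nat := [seq val i | i <- val w].
Definition swapi (s : seq nat) (i : nat) :=
  set_nth 0 (set_nth 0 s i (nth 0 s i.+1)) i.+1 (nth 0 s i).
(* parity of v_k (0-based k): odd iff k >= m *)
Definition par (m k : nat) : bool := (m <= k)%N.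
(* coefficient of basis vector u in T_(i+1) applied to basis vector w *)
Definition Tcoef (F : fieldType) (q : F) (m i : nat) (u w : seq nat) : F :=
  let k := nth 0 w i in let l := nth 0 w i.+1 in
  let sg := (-1) ^+ (par m k && par m l) in
  if k == l then
    (if u == w then ((-1) ^+ par m k * (q + q^-1) + q - q^-1) / 2%:R else 0)
  else if (k < l)%N then
    (if u == swapi w i then sg else 0) + (if u == w then q - q^-1 else 0)
  else (if u == swapi w i then sg else 0).
(* pi_r(T_(i+1)) as a matrix acting on column coordinate vectors *)
Definition Tmat (F : fieldType) (q : F) (m n r : nat) (i : nat)
  : 'M[F]_#|{: word m n r}| :=
  \matrix_(a, b) Tcoef q m i (wv (enum_val a)) (wv (enum_val b)).

Definition mat_block (F : fieldType) (H : falgType F) (U : {vspace H}) (d : nat)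
  : Prop :=
  exists f : 'Hom('M[F]_d, H),
    [/\ lker f = 0%VS, limg f = U & forall A B, f (A *m B) = f A * f B].

Definition tildeI (F : fieldType) (H : falgType F) r (hat : 'End(H))
  (I : ptn r -> {vspace H}) (l : ptn r) : {vspace H} :=
  if l == ptn_conj l then (I l :&: fixedSpace hat)%VS
  else ((\1 + hat)%VF @: I l)%VS.

From HB Require Import structures.
From mathcomp Require Import all_boot all_order all_algebra falgebra zify.
Import GRing.Theory.

(* The blocks I_l have central idempotents e_l, and left multiplication by
   pi(e_l) projects the image of pi onto pi(I_l); this makes all the sums of
   block images direct, and pi(I_l) is 0 or a copy of I_l according as l lies
   in the hook or not.  The Goldman involution swaps I_l and I_l', so a fixed
   element x splits into the pieces e_l x + e_l' x, which lie in the tilde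
   space of the pair {l, l'}, and the fixed pieces e_l x of the self-conjugate
   blocks.  For l in H_1 the partner l' is outside the hook, so pi kills the
   hat-part and pi(tilde I_l) = pi(I_l).  For l in H_0 a pair {l, l'}
   contributes dim I_l to C^0 and 2 dim I_l to A^0, and a self-conjugate block
   contributes 2 (d/2)^2 to C^0 and d^2 to A^0. *)

Lemma count_ltn_iota a r : count (fun i => (i < a)%N) (iota 0 r) = minn a r.
Proof.
elim: r => [|r IH]; first by rewrite minn0.
rewrite -addn1 iotaD count_cat IH /= addn0 add0n.
by case: (ltnP r a) => /= ?; lia.
Qed.

Lemma sorted_geq_count_upclosed (p : pred nat) (s : seq nat) :
  sorted geq s -> (forall x y, (x <= y)%N -> p x -> p y) ->
  forall j, (j < size s)%N -> (j < count p s)%N = p (nth 0 s j).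
Proof.
move=> s_sorted p_up; elim: s s_sorted => [|x s IH] s_sorted j //=.
have geq_tr : transitive geq by move=> b a c /= h1 h2; exact: leq_trans h2 h1.
move: s_sorted; rewrite /= (path_sortedE geq_tr) => /andP[/allP le_s_x s_sorted].
have count0 : ~~ p x -> count p s = 0%N.
  move=> npx; apply/eqP; rewrite -leqn0 leqNgt -has_count; apply/hasPn => y ys.
  by apply: contra npx; apply: p_up; exact: le_s_x.
case: j => [|j] /= lt_j.
  by case px: (p x); rewrite //= count0 ?px.
case px: (p x) => /=; first by rewrite add1n ltnS IH.
rewrite count0 ?px // add0n; apply/esym/negbTE; apply: contra (negbT px).
by apply: p_up; apply: le_s_x; rewrite mem_nth.
Qed.

Section Partitions.
Context {r : nat}.
Implicit Types l k : ptn r.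

Lemma size_pv l : size (pv l) = r.
Proof. by rewrite /pv size_map size_tuple. Qed.

Lemma mem_pv_leq l x : x \in pv l -> (x <= r)%N.
Proof. by case/mapP => i _ ->; rewrite -ltnS ltn_ord. Qed.

Lemma pv_inj : injective (@pv r).
Proof. by move=> l k /(inj_map val_inj) /val_inj. Qed.

Lemma pv_conj l :
  pv (ptn_conj l) = [seq count (fun x => (i < x)%N) (pv l) | i <- iota 0 r].
Proof.
rewrite /pv /ptn_conj /= -map_comp -val_enum_ord -map_comp; apply: eq_map => i /=.
by rewrite inordK // ltnS -[X in (_ <= X)%N](size_pv l) count_size.
Qed.

Lemma sumn_count_swap (s t : seq nat) :
  sumn [seq count (fun x => (i < x)%N) s | i <- t] =
  sumn [seq count (fun i => (i < x)%N) t | x <- s].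
Proof.
rewrite !sumnE !big_map.
under eq_bigr => i _ do rewrite -sumn_count sumnE big_map.
rewrite exchange_big /=; apply: eq_bigr => x _.
by rewrite -sumn_count sumnE big_map.
Qed.

Lemma is_part_conj {l} : is_part l -> is_part (ptn_conj l).
Proof.
case/andP=> l_sorted l_sum; apply/andP; split.
  rewrite pv_conj sorted_map; apply: sub_sorted (iota_ltn_sorted 0 r).
  by move=> i j /= lt_ij; apply: sub_count => x /=; exact: ltn_trans.
apply/eqP; apply: etrans (eqP l_sum).
rewrite pv_conj sumn_count_swap sumnE [RHS]sumnE !big_map.
apply: eq_big_seq => i _; rewrite count_ltn_iota.
by apply/minn_idPl; rewrite -ltnS ltn_ord.
Qed.

Lemma ptn_conjK {l} : is_part l -> ptn_conj (ptn_conj l) = l.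
Proof.
case/andP=> l_sorted _; apply: pv_inj.
rewrite pv_conj -[RHS](mkseq_nth 0 (pv l)) size_pv /mkseq; apply/eq_in_map => j.
rewrite mem_iota add0n => /andP[_ lt_jr]; rewrite pv_conj count_map.
rewrite (eq_in_count (a2 := fun i => (i < nth 0 (pv l) j)%N)); last first.
  move=> i _ /=; rewrite sorted_geq_count_upclosed ?size_pv //.
  by move=> x y /= h1 h2; exact: leq_trans h2 h1.
rewrite count_ltn_iota; apply/minn_idPl.
by apply/mem_pv_leq/mem_nth; rewrite size_pv.
Qed.

Lemma inH0_conj m n l : is_part l -> inH0 m n (ptn_conj l) = inH0 m n l.
Proof. by move=> l_part; rewrite /inH0 ptn_conjK // andbC. Qed.

Lemma ptn_gt_irr l : ptn_gt l l = false.
Proof. by rewrite /ptn_gt; elim: (pv l) => //= x s ->; rewrite ltnn eqxx. Qed.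

Lemma ptn_gt_asym l k : ptn_gt l k -> ptn_gt k l = false.
Proof.
rewrite /ptn_gt; elim: (pv k) (pv l) => [|x s IH] [|y t] //= /orP[lt_xy | /andP[/eqP-> lt_st]].
  by rewrite ltnNge (ltnW lt_xy) gtn_eqF.
by rewrite ltnn eqxx IH.
Qed.

Lemma ptn_gt_total {l k} : l != k -> ptn_gt l k || ptn_gt k l.
Proof.
rewrite /ptn_gt -(inj_eq pv_inj); have := etrans (size_pv l) (esym (size_pv k)).
elim: (pv k) (pv l) => [|x s IH] [|y t] //= [eq_size] neq.
case: (ltngtP x y) => //= eq_xy; apply: IH => //.
by apply: contra neq => /eqP->; rewrite eq_xy.
Qed.

Lemma ptn_gt_conj_neq {l} : ptn_gt l (ptn_conj l) -> l != ptn_conj l.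
Proof. by apply: contraTneq => <-; rewrite ptn_gt_irr. Qed.

Lemma ptn_gt_conj_pair_neq {l k} : is_part k ->
  ptn_gt l (ptn_conj l) -> ptn_gt k (ptn_conj k) -> l != ptn_conj k.
Proof.
move=> k_part gt_l gt_k; apply/eqP => lk.
by rewrite lk ptn_conjK // ptn_gt_asym in gt_l.
Qed.

Lemma big_ptn_conj_split {V : nmodType} {Q : pred (ptn r)} (G : ptn r -> V) :
    (forall l, is_part l -> Q (ptn_conj l) = Q l) ->
  (\sum_(l | is_part l && Q l) G l =
   \sum_(l | [&& is_part l, Q l & ptn_gt l (ptn_conj l)]) (G l + G (ptn_conj l)) +
   \sum_(l | [&& is_part l, Q l & l == ptn_conj l]) G l)%R.
Proof.
move=> Q_conj; rewrite big_split /= -addrA.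
have -> : (\sum_(l | [&& is_part l, Q l & ptn_gt l (ptn_conj l)]) G (ptn_conj l) =
           \sum_(l | [&& is_part l, Q l & ptn_gt (ptn_conj l) l]) G l)%R.
  rewrite [RHS](reindex_onto (@ptn_conj r) (@ptn_conj r)) /=; last first.
    by move=> l /andP[l_part _]; rewrite ptn_conjK.
  apply: eq_bigl => l; apply/idP/idP.
    case/and3P=> l_part Ql gt_l; have l'_part := is_part_conj l_part.
    by rewrite l'_part Q_conj ?ptn_conjK ?Ql ?gt_l ?eqxx.
  case/andP=> /and3P[l'_part Ql' gt_l] /eqP ll; rewrite ll in gt_l.
  have l_part : is_part l by rewrite -ll is_part_conj.
  by rewrite l_part -Q_conj // Ql' gt_l.
rewrite [LHS]big_mkcond [X in (X + _)%R]big_mkcond [X in (_ + (X + _))%R]big_mkcond.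
rewrite [X in (_ + (_ + X))%R]big_mkcond -!big_split /=; apply: eq_bigr => l _.
case: (is_part l) (Q l) => [] [] /=; rewrite ?addr0 //.
have [<-|neq] := eqVneq l (ptn_conj l); first by rewrite ptn_gt_irr !add0r.
have /orP[gt_l | gt_l'] := ptn_gt_total neq.
  by rewrite gt_l ptn_gt_asym // !addr0.
by rewrite gt_l' ptn_gt_asym // add0r addr0.
Qed.

End Partitions.

Local Open Scope ring_scope.

Lemma capv_fixedSpace_lker (K : fieldType) (V : vectType K) (f : 'End(V))
    (U W : {vspace V}) :
  (U <= fixedSpace f)%VS -> (W <= lker f)%VS -> (U :&: W = 0)%VS.
Proof.
move=> /fixedSpacesP fixU /subvP kerW; apply/eqP; rewrite -subv0.
apply/subvP => y /memv_capP[yU yW]; rewrite memv0 -(fixU y yU) -memv_ker.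
exact: kerW.
Qed.

Lemma directv_sum_fixed_lker (K : fieldType) (V : vectType K) (J : finType)
    (R : pred J) (U : J -> {vspace V}) (p : J -> 'End(V)) :
    (forall k, R k -> (U k <= fixedSpace (p k))%VS) ->
    (forall k l, R k -> R l -> l != k -> (U l <= lker (p k))%VS) ->
  directv (\sum_(l | R l) U l).
Proof.
move=> fixU kerU; apply/directv_sum_independent => u Uu sum0 k Rk.
have := congr1 (p k) sum0; rewrite linear_sum linear0 (bigD1 k) //= big1 ?addr0.
  by move/fixedSpacesP: (fixU k Rk) => -> //; exact: Uu.
move=> l /andP[Rl neq]; apply/eqP; rewrite -memv_ker.
by apply: subvP (kerU k l Rk Rl neq) _ _; exact: Uu.
Qed.

Lemma agenv_sub_fixedSpace (K : fieldType) (A : falgType K) (g : 'End(A))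
    (U : {vspace A}) :
    g 1 = 1 -> (forall x y, g (x * y) = g x * g y) ->
    (U <= fixedSpace g)%VS -> (agenv U <= fixedSpace g)%VS.
Proof.
move=> g1 gM fixU; apply: agenv_sub_modl.
  by rewrite -memvE; apply/fixedSpaceP.
apply/prodvP => u v /(subvP fixU) /fixedSpaceP gu /fixedSpaceP gv.
by apply/fixedSpaceP; rewrite gM gu gv.
Qed.

Lemma mul_morph_involutive {K : fieldType} {A : falgType K} {g : 'End(A)} {s : seq A} :
    g 1 = 1 -> (forall x y, g (x * y) = g x * g y) -> agenv (span s) = fullv ->
    (forall t, t \in s -> g (g t) = t) -> involutive g.
Proof.
move=> g1 gM gen_s gK_s x.
have : (agenv (span s) <= fixedSpace (g \o g)%VF)%VS.
  apply: agenv_sub_fixedSpace; first by rewrite comp_lfunE !g1.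
    by move=> u v; rewrite !comp_lfunE !gM.
  by apply/span_subvP => t s_t; apply/fixedSpaceP; rewrite comp_lfunE gK_s.
by rewrite gen_s => /fixedSpacesP/(_ x (memvf x)); rewrite comp_lfunE.
Qed.

Lemma dim_mat_block {F : fieldType} {H : falgType F} {U : {vspace H}} {d} :
  mat_block U d -> \dim U = (d * d)%N.
Proof.
by case=> f [kf <- _]; rewrite limg_dim_eq ?kf ?capv0 // dimvf dim_matrix.
Qed.

Lemma mat_block_unit {F : fieldType} {H : falgType F} {U : {vspace H}} {d} :
  mat_block U d -> exists2 e, e \in U & forall y, y \in U -> e * y = y /\ y * e = y.
Proof.
case=> f [_ <- fM]; exists (f 1%:M); first exact: memv_img (memvf _).
by move=> _ /memv_imgP[M _ ->]; rewrite -!fM mul1mx mulmx1.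
Qed.

Section WedderburnBlocks.
Context {F : fieldType} {H : falgType F} {J : finType} {P : pred J}.
Context {I : J -> {vspace H}} {e : J -> H}.
Hypothesis I_sum : (\sum_(l | P l) I l)%VS = fullv.
Hypothesis I_direct : directv (\sum_(l | P l) I l).
Hypothesis I_ideal : forall {l}, P l -> forall x y, y \in I l ->
  (x * y \in I l) && (y * x \in I l).
Hypothesis e_mem : forall {l}, P l -> e l \in I l.
Hypothesis e_unit : forall {l}, P l -> forall y, y \in I l -> e l * y = y /\ y * e l = y.

Lemma block_eq0 {l k y} : P l -> P k -> l != k -> y \in I l -> y \in I k -> y = 0.
Proof.
move=> Pl Pk neq yl yk; apply/eqP; rewrite -memv0.
move/directv_sumP: I_direct => /(_ l Pl) <-.
by rewrite memv_cap yl; apply: (sumv_sup k) yk; rewrite Pk eq_sym.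
Qed.

Lemma mul_block_unit {k l y} : P k -> P l -> y \in I l ->
  e k * y = (if k == l then y else 0) /\ y * e k = (if k == l then y else 0).
Proof.
move=> Pk Pl yl; have [kl|neq] := eqVneq k l; first by rewrite -kl in yl *; exact: e_unit.
have /andP[ye_k ey_k] := I_ideal Pk y _ (e_mem Pk).
have /andP[ey_l ye_l] := I_ideal Pl (e k) _ yl.
by split; apply: (block_eq0 Pk Pl neq).
Qed.

Lemma block_unit_mull l x : P l -> e l * x \in I l.
Proof. by move=> Pl; have /andP[_ ->] := I_ideal Pl x _ (e_mem Pl). Qed.

Lemma sum_block_unit_mull x : \sum_(l | P l) e l * x = x.
Proof.
have /memv_sumP[u Uu ->] : x \in (\sum_(l | P l) I l)%VS by rewrite I_sum memvf.
apply: eq_bigr => k Pk; rewrite mulr_sumr (bigD1 k) //= big1 ?addr0.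
  by rewrite (mul_block_unit Pk Pk (Uu k Pk)).1 eqxx.
move=> l /andP[Pl neq].
by rewrite (mul_block_unit Pk Pl (Uu l Pl)).1 eq_sym (negbTE neq).
Qed.

Context {N : nat} (pi : 'Hom(H, 'M[F]_N)).
Hypothesis pi_mul : forall x y, pi (x * y) = pi x *m pi y.

Definition block_proj (Q : pred J) : 'End('M[F]_N) :=
  \sum_(l | P l && Q l) linfun (mulmx (pi (e l))).

Lemma block_projE {Q : pred J} {k y} : P k -> y \in (pi @: I k)%VS ->
  block_proj Q y = if Q k then y else 0.
Proof.
move=> Pk /memv_imgP[u uk ->]; rewrite sum_lfunE.
under eq_bigr => l /andP[Pl _] do
  rewrite lfunE /= -pi_mul (mul_block_unit Pl Pk uk).1 (fun_if pi) linear0.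
case Qk: (Q k); last first.
  by rewrite big1 // => l /andP[_ Ql]; case: eqP => // lk; rewrite lk Qk in Ql.
by rewrite (bigD1 k) ?Pk ?Qk //= eqxx big1 ?addr0 // => l /andP[_ /negbTE->].
Qed.

Lemma block_proj_fixed (Q : pred J) k : P k -> Q k ->
  (pi @: I k <= fixedSpace (block_proj Q))%VS.
Proof. by move=> Pk Qk; apply/fixedSpacesP => y yk; rewrite (block_projE Pk yk) Qk. Qed.

Lemma block_proj_lker (Q : pred J) k : P k -> ~~ Q k ->
  (pi @: I k <= lker (block_proj Q))%VS.
Proof.
by move=> Pk Qk; apply/subvP => y yk; rewrite memv_ker (block_projE Pk yk) (negbTE Qk).
Qed.

Lemma directv_sum_block_images (R : pred J) (U : J -> {vspace 'M[F]_N}) :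
    (forall l, R l -> P l /\ (U l <= pi @: I l)%VS) ->
  directv (\sum_(l | R l) U l).
Proof.
move=> RU; apply: (@directv_sum_fixed_lker _ _ _ _ _ (fun k => block_proj (pred1 k))).
  move=> k /RU[Pk sUk]; apply: subv_trans sUk _.
  exact: block_proj_fixed (pred1 k) _ Pk (eqxx k).
move=> k l _ /RU[Pl sUl] neq; apply: subv_trans sUl _.
exact: block_proj_lker (pred1 k) _ Pl neq.
Qed.

Lemma lker_block_pair a b : P a -> P b -> a != b ->
    (lker pi :&: I a = 0)%VS -> (lker pi :&: I b = 0)%VS ->
  ((I a + I b) :&: lker pi = 0)%VS.
Proof.
move=> Pa Pb neq inj_a inj_b; apply/eqP; rewrite -subv0; apply/subvP => u.
case/memv_capP => /memv_addP[ua ua_a [ub ub_b ->]]; rewrite memv_ker => /eqP pi0.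
have ker0 k v : P k -> (lker pi :&: I k = 0)%VS -> v \in I k ->
    e k * (ua + ub) = v -> v = 0.
  move=> Pk inj_k vk <-; apply/eqP; rewrite -memv0 -inj_k memv_cap.
  by rewrite memv_ker pi_mul pi0 mulmx0 eqxx block_unit_mull.
have ea : e a * (ua + ub) = ua.
  rewrite mulrDr (mul_block_unit Pa Pa ua_a).1 (mul_block_unit Pa Pb ub_b).1.
  by rewrite eqxx (negbTE neq) addr0.
have eb : e b * (ua + ub) = ub.
  rewrite mulrDr (mul_block_unit Pb Pa ua_a).1 (mul_block_unit Pb Pb ub_b).1.
  by rewrite eqxx eq_sym (negbTE neq) add0r.
by rewrite (ker0 a ua Pa inj_a ua_a ea) (ker0 b ub Pb inj_b ub_b eb) addr0 memv0.
Qed.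

End WedderburnBlocks.

Section GoldmanDecomposition.
Context {F : fieldType} {H : falgType F} {r m n : nat}.
Context {I : ptn r -> {vspace H}} {e : ptn r -> H} {d : ptn r -> nat}.
Hypothesis I_sum : (\sum_(l | is_part l) I l)%VS = fullv.
Hypothesis I_direct : directv (\sum_(l | is_part l) I l).
Hypothesis I_ideal : forall {l}, is_part l -> forall x y, y \in I l ->
  (x * y \in I l) && (y * x \in I l).
Hypothesis e_mem : forall {l}, is_part l -> e l \in I l.
Hypothesis e_unit : forall {l}, is_part l -> forall y, y \in I l ->
  e l * y = y /\ y * e l = y.
Hypothesis I_mat : forall {l}, is_part l -> (0 < d l)%N /\ mat_block (I l) (d l).

Context { hat : 'End(H) }.
Hypothesis hatK : forall x, hat (hat x) = x.
Hypothesis hatM : forall x y, hat (x * y) = hat x * hat y.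
Hypothesis I_hat : forall {l}, is_part l -> (hat @: I l)%VS = I (ptn_conj l).

Context {N : nat} { pi : 'Hom(H, 'M[F]_N) } {Ip Im : ptn r -> {vspace H}}.
Hypothesis pi_mul : forall x y, pi (x * y) = pi x *m pi y.
Hypothesis pi_inj : forall {l}, is_part l -> inH m n l -> (lker pi :&: I l)%VS = 0%VS.
Hypothesis pi_zero : forall {l}, is_part l -> ~~ inH m n l -> (pi @: I l)%VS = 0%VS.
Hypothesis I_self : forall {l}, is_part l -> l = ptn_conj l ->
  [/\ ~~ odd (d l),
      tildeI hat I l = (Ip l + Im l)%VS /\ (Ip l :&: Im l = 0)%VS,
      (forall x y, x \in Ip l -> y \in Im l -> x * y = 0 /\ y * x = 0),
      mat_block (Ip l) (d l %/ 2)%N & mat_block (Im l) (d l %/ 2)%N].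

Local Notation c := (@ptn_conj r).
Local Notation A0 := (\sum_(l | is_part l && inH0 m n l) (pi @: I l))%VS.
Local Notation A1 := (\sum_(l | is_part l && inH1 m n l) (pi @: I l))%VS.
Local Notation X := (\sum_(l | [&& is_part l, inH0 m n l & ptn_gt l (ptn_conj l)])
                       (pi @: tildeI hat I l))%VS.
Local Notation Y := (\sum_(l | [&& is_part l, inH0 m n l & l == ptn_conj l])
                       ((pi @: Ip l) + (pi @: Im l)))%VS.
Local Notation Y' := (\sum_(l | [&& is_part l, inH0 m n l & l == ptn_conj l])
                        (pi @: (Ip l + Im l)))%VS.
Local Notation C1 := (\sum_(l | is_part l && inH1 m n l) (pi @: tildeI hat I l))%VS.

Lemma mem_block_hat {l x} : is_part l -> x \in I l -> hat x \in I (c l).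
Proof. by move=> l_part xl; rewrite -I_hat // memv_img. Qed.

Lemma hat_block_unit {l} : is_part l -> hat (e l) = e (c l).
Proof.
move=> l_part; have l'_part := is_part_conj l_part.
have /memv_imgP[z zl ez] : e (c l) \in (hat @: I l)%VS by rewrite I_hat // e_mem.
have /(e_unit l'_part)[<- _] := mem_block_hat l_part (e_mem l_part).
by rewrite {1}ez -hatM (e_unit l_part z zl).2 ez.
Qed.

Lemma dim_block_conj {l} : is_part l -> \dim (I (c l)) = \dim (I l).
Proof.
have hat_inj : lker hat = 0%VS by apply/eqP/lker0P/(can_inj hatK).
by move=> l_part; rewrite -I_hat // limg_dim_eq // hat_inj capv0.
Qed.

Lemma tildeI_fixed l : (tildeI hat I l <= fixedSpace hat)%VS.
Proof.
rewrite /tildeI; case: ifP => _; first exact: capvSr.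
apply/subvP => _ /memv_imgP[x _ ->]; apply/fixedSpaceP.
by rewrite add_lfunE id_lfunE linearD /= hatK addrC.
Qed.

Lemma tildeI_sub_pair {l} : is_part l -> l != c l ->
  (tildeI hat I l <= I l + I (c l))%VS.
Proof.
move=> l_part neq; rewrite /tildeI (negbTE neq).
apply/subvP => _ /memv_imgP[x xl ->]; rewrite add_lfunE id_lfunE.
by rewrite memv_add // mem_block_hat.
Qed.

(* [1 + hat] is injective on [I l] because [hat] maps [I l] onto [I l'],
   which meets [I l] trivially. *)
Lemma dim_tildeI_pair {l} : is_part l -> l != c l -> \dim (tildeI hat I l) = \dim (I l).
Proof.
move=> l_part neq; rewrite /tildeI (negbTE neq) limg_dim_eq //.
apply/eqP; rewrite -subv0; apply/subvP => u /memv_capP[ul].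
rewrite memv_ker add_lfunE id_lfunE memv0 => /eqP hat_u.
have : hat u \in I l by rewrite -(addr0_eq hat_u) memvN.
move/(block_eq0 I_direct (is_part_conj l_part) l_part _ (mem_block_hat l_part ul)).
by rewrite eq_sym => /(_ neq) hat_u0; rewrite -[u]hatK hat_u0 linear0.
Qed.

Lemma dim_limg_block {l} : is_part l -> inH m n l -> \dim (pi @: I l) = \dim (I l).
Proof. by move=> l_part hl; rewrite limg_dim_eq // capvC pi_inj. Qed.

Lemma limg_tildeI_hook1 {l} : is_part l -> inH1 m n l ->
  (pi @: tildeI hat I l)%VS = (pi @: I l)%VS.
Proof.
move=> l_part /andP[hl hl']; have neq : l != c l by apply: contraNneq hl' => <-.
rewrite /tildeI (negbTE neq) -limg_comp; apply: eq_in_limg => x xl.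
rewrite comp_lfunE add_lfunE id_lfunE linearD /=.
have : pi (hat x) \in (pi @: I (c l))%VS by rewrite memv_img // mem_block_hat.
by rewrite pi_zero ?is_part_conj // memv0 => /eqP->; rewrite addr0.
Qed.

Lemma dim_limg_tildeI_pair {l} : is_part l -> inH0 m n l -> l != c l ->
  \dim (pi @: tildeI hat I l) = \dim (I l).
Proof.
move=> l_part /andP[hl hl'] neq; rewrite -dim_tildeI_pair // limg_dim_eq //.
have l'_part := is_part_conj l_part.
apply/eqP; rewrite -subv0 -(lker_block_pair I_direct (@I_ideal) (@e_mem) (@e_unit) pi pi_mul
  _ _ l_part l'_part neq (pi_inj l_part hl) (pi_inj l'_part hl')).
by rewrite capvS // tildeI_sub_pair.
Qed.

Lemma dim_block_self_conj {l} : is_part l -> inH m n l -> l = c l ->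
  \dim (I l) = (2 * \dim ((pi @: Ip l) + (pi @: Im l)))%N.
Proof.
move=> l_part hl ll; have [d_even [tildeIE Ip_Im0] _ Ip_mat Im_mat] := I_self l_part ll.
have tildeI_sub : (tildeI hat I l <= I l)%VS by rewrite /tildeI -ll eqxx capvSl.
rewrite -limgD -tildeIE limg_dim_eq; last first.
  by apply/eqP; rewrite -subv0 -(pi_inj l_part hl) capvC capvS.
rewrite tildeIE dimv_disjoint_sum // (dim_mat_block Ip_mat) (dim_mat_block Im_mat).
rewrite (dim_mat_block (I_mat l_part).2) -{1 2}(divnK (_ : 2 %| d l)%N) ?dvdn2 //.
nia.
Qed.

Let unit_mull := block_unit_mull (@I_ideal) (@e_mem).
Let proj_fixed := block_proj_fixed I_direct (@I_ideal) (@e_mem) (@e_unit) pi pi_mul.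
Let proj_lker := block_proj_lker I_direct (@I_ideal) (@e_mem) (@e_unit) pi pi_mul.
Local Notation proj Q := (@block_proj _ _ _ (@is_part r) e _ pi Q).

Lemma limg_hook_split : limg pi = (A0 + A1)%VS.
Proof.
rewrite -I_sum limg_sum (bigID (fun l => inH0 m n l)) /=; congr (_ + _)%VS.
rewrite [LHS]big_mkcond [RHS]big_mkcond; apply: eq_bigr => l _.
case l_part: (is_part l) => //=; rewrite /inH1 /inH0.
by case hl: (inH m n l) => //=; rewrite pi_zero ?hl.
Qed.

Lemma capv_hook_split : (A0 :&: A1 = 0)%VS.
Proof.
apply: (@capv_fixedSpace_lker _ _ (proj (@inH0 m n r))).
  by apply/subv_sumP => l /andP[l_part hl]; apply: proj_fixed.
apply/subv_sumP => l /andP[l_part /andP[hl hl']]; apply: proj_lker => //.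
by rewrite /inH0 hl.
Qed.

Lemma limg_tildeI_hook1_sum : C1 = A1.
Proof. by apply: eq_bigr => l /andP[l_part hl]; apply: limg_tildeI_hook1. Qed.

Lemma limg_Ip_Im_sub {l} : is_part l -> l = c l ->
  ((pi @: Ip l) + (pi @: Im l) <= pi @: I l)%VS.
Proof.
move=> l_part ll; have [_ [tildeIE _] _ _ _] := I_self l_part ll.
by rewrite -limgD -tildeIE limgS // /tildeI -ll eqxx capvSl.
Qed.

Lemma limg_tildeI_pair_sub {l} : is_part l -> l != c l ->
  (pi @: tildeI hat I l <= pi @: I l + pi @: I (c l))%VS.
Proof. by move=> l_part neq; rewrite -limgD limgS // tildeI_sub_pair. Qed.

Lemma limg_tildeI_hook0_sub : (X + Y <= A0)%VS.
Proof.
rewrite subv_add; apply/andP; split; apply/subv_sumP.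
  move=> l /and3P[l_part hl gt_l].
  apply: subv_trans (limg_tildeI_pair_sub l_part (ptn_gt_conj_neq gt_l)) _.
  rewrite subv_add (sumv_sup l) ?l_part ?hl //= (sumv_sup (c l)) //.
  by rewrite is_part_conj // inH0_conj.
move=> l /and3P[l_part hl /eqP ll].
by apply: subv_trans (limg_Ip_Im_sub l_part ll) _; rewrite (sumv_sup l) ?l_part.
Qed.

Lemma tildeI_hook_sub_limg_fixed : (X + Y + C1 <= pi @: fixedSpace hat)%VS.
Proof.
rewrite !subv_add -andbA; apply/and3P; split; apply/subv_sumP => l.
- by move=> _; apply/limgS/tildeI_fixed.
- move=> /and3P[l_part _ /eqP ll]; have [_ [tildeIE _] _ _ _] := I_self l_part ll.
  by rewrite -limgD -tildeIE limgS // tildeI_fixed.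
- by move=> _; apply/limgS/tildeI_fixed.
Qed.

(* A [hat]-fixed [x] is the sum of its block components [e l * x], and [hat]
   maps the component in [I l] to the one in [I l']. *)
Lemma limg_fixed_sub_tildeI_hook : (pi @: fixedSpace hat <= X + Y + C1)%VS.
Proof.
apply/subvP => _ /memv_imgP[x /fixedSpaceP hat_x ->].
rewrite -(sum_block_unit_mull I_sum I_direct (@I_ideal) (@e_mem) (@e_unit) x).
rewrite linear_sum /= (bigID (fun l => inH0 m n l)) /=; apply: memv_add.
  rewrite (big_ptn_conj_split _ (inH0_conj m n)); apply: memv_add; apply: memv_sumr.
    move=> l /and3P[l_part _ gt_l]; rewrite -linearD memv_img //.
    have -> : e (c l) * x = hat (e l * x) by rewrite hatM hat_block_unit // hat_x.
    rewrite /tildeI (negbTE (ptn_gt_conj_neq gt_l)).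
    have -> : e l * x + hat (e l * x) = (\1 + hat)%VF (e l * x).
      by rewrite add_lfunE id_lfunE.
    by rewrite memv_img // unit_mull.
  move=> l /and3P[l_part _ /eqP ll]; have [_ [tildeIE _] _ _ _] := I_self l_part ll.
  rewrite -limgD -tildeIE memv_img // /tildeI -ll eqxx memv_cap unit_mull //.
  by apply/fixedSpaceP; rewrite hatM hat_block_unit // hat_x -ll.
apply: rpred_sum => l /andP[l_part not_h0].
have [hl|hl] := boolP (inH m n l); last first.
  have := memv_img pi (unit_mull l x l_part).
  by rewrite pi_zero // memv0 => /eqP->; rewrite mem0v.
have h1 : inH1 m n l by move: not_h0; rewrite /inH0 /inH1 hl.
apply: (sumv_sup l); first by rewrite l_part h1.
by rewrite -memvE limg_tildeI_hook1 // memv_img // unit_mull.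
Qed.

Lemma directv_hook0 : directv A0.
Proof.
apply: (directv_sum_block_images I_direct (@I_ideal) (@e_mem) (@e_unit) pi pi_mul
  (fun l => is_part l && inH0 m n l) (fun l => pi @: I l)%VS).
by move=> l /andP[l_part _].
Qed.

Lemma directv_self_conj : directv Y'.
Proof.
apply: (directv_sum_block_images I_direct (@I_ideal) (@e_mem) (@e_unit) pi pi_mul).
by move=> l /and3P[l_part _ /eqP ll]; rewrite limgD; split; last exact: limg_Ip_Im_sub.
Qed.

Lemma directv_conj_pairs : directv X.
Proof.
pose pair_proj k := proj [pred j | (j == k) || (j == c k)].
apply: (@directv_sum_fixed_lker _ _ _ _ _ pair_proj).
  move=> k /and3P[k_part _ gt_k]; have neq := ptn_gt_conj_neq gt_k.
  apply: subv_trans (limg_tildeI_pair_sub k_part neq) _.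
  by rewrite subv_add !proj_fixed ?is_part_conj //= eqxx ?orbT.
move=> k l /and3P[k_part _ gt_k] /and3P[l_part _ gt_l] neq.
apply: subv_trans (limg_tildeI_pair_sub l_part (ptn_gt_conj_neq gt_l)) _.
have l_k' := ptn_gt_conj_pair_neq k_part gt_l gt_k.
have l'_k : ptn_conj l != k by rewrite eq_sym ptn_gt_conj_pair_neq.
have l'_k' : ptn_conj l != ptn_conj k.
  by apply: contra neq => /eqP/(congr1 c); rewrite !ptn_conjK // => ->.
by rewrite subv_add !proj_lker ?is_part_conj //= negb_or ?neq ?l_k' ?l'_k ?l'_k'.
Qed.

Lemma capv_conj_pairs_self_conj : (X :&: Y = 0)%VS.
Proof.
rewrite capvC; apply: (@capv_fixedSpace_lker _ _ (proj [pred j | j == c j])).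
  apply/subv_sumP => l /and3P[l_part _ /eqP ll].
  by apply: subv_trans (limg_Ip_Im_sub l_part ll) _; apply: proj_fixed => //=; rewrite -ll.
apply/subv_sumP => l /and3P[l_part _ gt_l]; have neq := ptn_gt_conj_neq gt_l.
apply: subv_trans (limg_tildeI_pair_sub l_part neq) _.
by rewrite subv_add !proj_lker ?is_part_conj //= ptn_conjK // eq_sym.
Qed.

Lemma dim_hook0 : \dim A0 = (2 * \dim (X + Y))%N.
Proof.
rewrite dimv_disjoint_sum ?capv_conj_pairs_self_conj //.
have -> : Y = Y' by apply: eq_bigr => l _; rewrite limgD.
rewrite (directvP directv_hook0) (directvP directv_conj_pairs) (directvP directv_self_conj) /=.
rewrite (big_ptn_conj_split _ (inH0_conj m n)) mulnDr !big_distrr /=; congr (_ + _)%N.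
  apply: eq_bigr => l /and3P[l_part /andP[hl hl'] gt_l].
  rewrite dim_limg_tildeI_pair ?ptn_gt_conj_neq //; last exact/andP.
  rewrite !dim_limg_block ?is_part_conj // dim_block_conj //.
  by rewrite mul2n -addnn.
apply: eq_bigr => l /and3P[l_part /andP[hl _] /eqP ll].
by rewrite dim_limg_block // (dim_block_self_conj l_part hl ll) limgD.
Qed.

Lemma limg_fixed_hook_split : (pi @: fixedSpace hat)%VS = (X + Y + C1)%VS.
Proof.
by apply/eqP; rewrite eqEsubv limg_fixed_sub_tildeI_hook tildeI_hook_sub_limg_fixed.
Qed.

Lemma capv_fixed_hook_split : ((X + Y) :&: C1 = 0)%VS.
Proof.
apply/eqP; rewrite -subv0 -[Z in (_ <= Z)%VS]capv_hook_split.
by rewrite capvS ?limg_tildeI_hook0_sub ?limg_tildeI_hook1_sum.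
Qed.

End GoldmanDecomposition.

Theorem theorem6p1
  (* \bar K : an algebraically closed field of characteristic 0 containing q,
     q transcendental over Q *)
  (F : closedFieldType) (q : F)
  (charF0 : [pchar F] =i pred0)
  (q_transc : forall p : {poly rat}, p != 0 -> ~~ root (map_poly ratr p) q)
  (m n r : nat) (r_ge2 : (2 <= r)%N)
  (* the Hecke algebra H_{\bar K, r}(q): generated by T_1..T_{r-1} subject to
     the quadratic and braid relations, of dimension r! *)
  (H : falgType F) (T : 'I_r.-1 -> H)
  (T_quad : forall i, T i * T i = (q - q^-1) *: T i + 1)
  (T_braid : forall i j : 'I_r.-1, i.+1 = j :> nat -> T i * T j * T i = T j * T i * T j)
  (T_comm : forall i j : 'I_r.-1, (i.+1 < j)%N -> T i * T j = T j * T i)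
  (T_gen : agenv (span [seq T i | i <- enum 'I_r.-1]) = fullv)
  (dimH : \dim {: H} = r`!)
  (* the Goldman involution *)
  (hat : 'End(H))
  (hat1 : hat 1 = 1)
  (hatM : forall x y, hat (x * y) = hat x * hat y)
  (hatT : forall i, hat (T i) = (q - q^-1)%:A - T i)
  (* the q-permutation representation pi_r on V^{\otimes r} *)
  (pi : 'Hom(H, 'M[F]_#|{: word m n r}|))
  (pi1 : pi 1 = 1%:M)
  (piM : forall x y, pi (x * y) = pi x *m pi y)
  (piT : forall i : 'I_r.-1, pi (T i) = Tmat q m n r i)
  (* Wedderburn decomposition H = \oplus_lambda I_lambda, I_lambda = Mat_{d_lambda} *)
  (I : ptn r -> {vspace H}) (d : ptn r -> nat)
  (I_sum : (\sum_(l | is_part l) I l)%VS = fullv)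
  (I_direct : directv (\sum_(l | is_part l) I l))
  (I_ideal : forall l, is_part l -> forall x y, y \in I l ->
       (x * y \in I l) && (y * x \in I l))
  (I_mat : forall l, is_part l -> (0 < d l)%N /\ mat_block (I l) (d l))
  (I_hat : forall l, is_part l -> (hat @: I l)%VS = I (ptn_conj l))
  (pi_inj : forall l, is_part l -> inH m n l -> (lker pi :&: I l)%VS = 0%VS)
  (pi_zero : forall l, is_part l -> ~~ inH m n l -> (pi @: I l)%VS = 0%VS)
  (* for lambda = lambda', \tilde I_lambda = \tilde I^+ \oplus \tilde I^-,
     two simple algebras each isomorphic to Mat_{d_lambda/2} *)
  (Ip Im : ptn r -> {vspace H})
  (I_self : forall l, is_part l -> l = ptn_conj l ->
     [/\ ~~ odd (d l),
         tildeI hat I l = (Ip l + Im l)%VS /\ (Ip l :&: Im l = 0)%VS,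
         (forall x y, x \in Ip l -> y \in Im l -> x * y = 0 /\ y * x = 0),
         mat_block (Ip l) (d l %/ 2)%N & mat_block (Im l) (d l %/ 2)%N]) :
  let A := limg pi in
  let C := (pi @: fixedSpace hat)%VS in
  let A0 := (\sum_(l | is_part l && inH0 m n l) (pi @: I l))%VS in
  let A1 := (\sum_(l | is_part l && inH1 m n l) (pi @: I l))%VS in
  let C0 := ((\sum_(l | [&& is_part l, inH0 m n l & ptn_gt l (ptn_conj l)])
                 (pi @: tildeI hat I l))
           + (\sum_(l | [&& is_part l, inH0 m n l & l == ptn_conj l])
                 ((pi @: Ip l) + (pi @: Im l))))%VS in
  let C1 := (\sum_(l | is_part l && inH1 m n l) (pi @: tildeI hat I l))%VS in
  [/\ A = (A0 + A1)%VS /\ (A0 :&: A1 = 0)%VS,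
      C = (C0 + C1)%VS /\ (C0 :&: C1 = 0)%VS,
      (C0 <= A0)%VS /\ \dim A0 = (2 * \dim C0)%N
    & C1 = A1 /\ \dim A1 = \dim C1].
Proof.
move=> A C A0 A1 C0 C1.
have hatK : involutive hat.
  apply: (mul_morph_involutive hat1 hatM T_gen) => _ /mapP[i _ ->].
  by rewrite hatT linearB linearZ /= hat1 hatT opprB addrC subrK.
have block_unit l : exists u, is_part l ->
    u \in I l /\ (forall y, y \in I l -> u * y = y /\ y * u = y).
  have [l_part|] := boolP (is_part l); last by exists 0.
  by have [u u_mem u_unit] := mat_block_unit (I_mat l l_part).2; exists u.
have [e e_block] := fin_all_exists block_unit.
have e_mem l (l_part : is_part l) := (e_block l l_part).1.
have e_unit l (l_part : is_part l) := (e_block l l_part).2.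
split; split.
- exact: (limg_hook_split I_sum pi_zero).
- exact: (capv_hook_split I_direct I_ideal e_mem e_unit piM).
- exact: (limg_fixed_hook_split I_sum I_direct I_ideal e_mem e_unit hatK hatM I_hat
            pi_zero I_self).
- exact: (capv_fixed_hook_split I_direct I_ideal e_mem e_unit I_hat piM pi_zero I_self).
- exact: (limg_tildeI_hook0_sub I_hat I_self).
- exact: (dim_hook0 I_direct I_ideal e_mem e_unit I_mat hatK I_hat piM pi_inj I_self).
- exact: (limg_tildeI_hook1_sum I_hat pi_zero).
- by rewrite /C1 (limg_tildeI_hook1_sum I_hat pi_zero).
Qed.
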